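(* For every odd prime $p$ there exists a $\Gamma_p$-equivariant continuous map $f:S(U_1\oplus U_1)\to S(U_p\oplus (p-1)V_1)$. (Here $\dim_{\mathbb{R}}(U_1\oplus U_1)=4p>\dim_{\mathbb{R}}(U_p\oplus(p-1)V_1)=4p-2$, and both representations have no nonzero $\Gamma_p$-fixed vectors.)
   Context: Let $a$ be a fixed generator of $C_p$ and $\xi_p=e^{2\pi\sqrt{-1}/p}$. $\Gamma_p=T^{p-1}\rtimes_\rho C_p$ is the semidirect product with $a t a^{-1}=\rho(a)(t)$, $\rho(a)(t)=(t_{p-1}^{-1},\,t_1t_{p-1}^{-1},\dots,t_{p-2}t_{p-1}^{-1})$ for $t=(t_1,\dots,t_{p-1})$. For $k\in\mathbb{Z}\setminus\{0\}$, $U_k=\mathbb{C}^p$ with coordinates $(z_0,\dots,z_{p-1})$, $a\cdot(z_0,\dots,z_{p-1})=(z_{p-1},z_0,\dots,z_{p-2})$ and $t\cdot(z_0,\dots,z_{p-1})=(t_1^kz_0,\ t_1^{-k}t_2^kz_1,\ \dots,\ t_{p-2}^{-k}t_{p-1}^kz_{p-2},\ t_{p-1}^{-k}z_{p-1})$. $V_1=\mathbb{C}$ with $T^{p-1}$ acting trivially and $a\cdot z=\xi_pz$; $(p-1)V_1$ is the direct sum of $p-1$ copies. $S(\cdot)$ denotes the unit sphere of the underlying real representation. *)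

From HB Require Import structures.
From mathcomp Require Import all_boot all_order all_algebra.
From mathcomp Require Import all_classical all_reals all_analysis.
From mathcomp Require Import complex.
Import Order.TTheory GRing.Theory Num.Theory numFieldNormedType.Exports.



Unset Printing Implicit Defensive.

Local Open Scope ring_scope.
Local Open Scope complex_scope.

(* The complex numbers over a real type R, packaged as a numClosedFieldType
   so that the (norm) topology of MathComp-Analysis is found canonically. *)
Definition Cplx (R : realType) : numClosedFieldType := R[i].

Section Gamma.
Variable R : realType.
Local Notation C := (Cplx R).

Definition xi (p : nat) : C :=
  (cos (2 * pi / p%:R) +i* sin (2 * pi / p%:R))%C.

(* An element t = (t_1, ..., t_{p-1}) of the torus T^{p-1} is encoded as a
   function t : nat -> C; only the values t 1, ..., t (p-1) matter. *)
Definition in_torus (p : nat) (t : nat -> C) : Prop :=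
  forall i, (0 < i < p)%N -> `|t i| = 1.

Definition tc (p : nat) (t : nat -> C) (j : nat) : C :=
  if (0 < j < p)%N then t j else 1.

Definition sqnorm (n : nat) (v : 'rV[C]_n) : C := \sum_(j < n) `|v ord0 j| ^+ 2.

Definition torusU (p : nat) (k : int) (t : nat -> C) (v : 'rV[C]_p) : 'rV[C]_p :=
  \row_(j < p) (tc p t j ^ (- k) * tc p t j.+1 ^ k * v ord0 j).

(* Action of the generator a on U_k: (z_0,...,z_{p-1}) |-> (z_{p-1}, z_0, ..., z_{p-2}),
   i.e. the new j-th coordinate is the old (j-1 mod p)-th one. *)
Definition shiftU (p : nat) (v : 'rV[C]_p) : 'rV[C]_p :=
  \row_(j < p) v ord0 (insubd j ((j + p.-1) %% p)%N).

Definition actU (p : nat) (k : int) (t : nat -> C) (m : nat) (v : 'rV[C]_p) :=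
  torusU p k t (iter m (shiftU p) v).

(* Action of t a^m on V_1 (T^{p-1} acts trivially, a acts by xi_p),
   coordinatewise on (p-1)V_1 = C^{p-1}. *)
Definition actV (p : nat) (t : nat -> C) (m : nat) (w : 'rV[C]_(p.-1)) :
  'rV[C]_(p.-1) := (xi p ^+ m) *: w.

Definition src (p : nat) := ('rV[C]_p * 'rV[C]_p)%type.
Definition tgt (p : nat) := ('rV[C]_p * 'rV[C]_(p.-1))%type.

Definition act_src (p : nat) (t : nat -> C) (m : nat) (x : src p) : src p :=
  (actU p 1 t m x.1, actU p 1 t m x.2).
Definition act_tgt (p : nat) (t : nat -> C) (m : nat) (y : tgt p) : tgt p :=
  (actU p p%:Z t m y.1, actV p t m y.2).

Definition S_src (p : nat) : set (src p) :=
  [set x | sqnorm p x.1 + sqnorm p x.2 = 1].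
Definition S_tgt (p : nat) : set (tgt p) :=
  [set y | sqnorm p y.1 + sqnorm p.-1 y.2 = 1].

End Gamma.

From HB Require Import structures.
From mathcomp Require Import all_boot all_order all_algebra.
From mathcomp Require Import all_classical all_reals all_analysis.
From mathcomp Require Import complex.
From mathcomp Require Import ring zify cyclic.
Import Order.TTheory GRing.Theory Num.Theory numFieldNormedType.Exports.
Local Open Scope ring_scope.
Local Open Scope classical_set_scope.

(* Write x = (z, w) with z, w in U_1, and let Z, W be the products of the coordinates
   of z and w; both are invariant under Gamma_p.  The U_p-component
   z_j^p conj(Z) + w_j^p conj(W) is then equivariant.  The numbers
   a_j = |z_j|^2 + i |w_j|^2 are torus-invariant and cyclically permuted by a, so
   a multiplies their k-th Fourier coefficient by xi^k; raising it to the power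
   k^(p-2), an inverse of k modulo p, turns this factor into xi, which gives the
   V_1-components.  This map psi has no zero on the sphere: psi(x) = 0 first gives
   |Z|^(2p) = -|W|^(2p) (p is odd), so Z = W = 0 and some z_j and some w_k vanish;
   it also kills all nonzero Fourier coefficients, so all a_j are equal, which
   forces z = w = 0.
   The required map is psi followed by radial projection. *)

Section PrimitiveRootSums.
Context {F : numDomainType} {n : nat} {z : F}.
Hypothesis prim_z : n.-primitive_root z.

Lemma sum_prim_root_expr m :
  \sum_(k < n) z ^+ (k * m) = if (n %| m)%N then n%:R else 0.
Proof.
under eq_bigr do rewrite mulnC exprM.
rewrite (prim_order_dvd prim_z); case: eqP => [-> | /eqP zm_neq1].
  by rewrite (eq_bigr (fun=> 1)) ?sumr_const ?card_ord // => i _; rewrite expr1n.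
have zmn : (z ^+ m) ^+ n = 1 by rewrite exprAC (prim_expr_order prim_z) // expr1n.
have := subrX1 (z ^+ m) n; rewrite zmn subrr => /esym/eqP.
by rewrite mulf_eq0 subr_eq0 (negbTE zm_neq1) => /eqP.
Qed.

Lemma prim_root_dft_const (a : 'I_n -> F) :
  (forall k, (0 < k < n)%N -> \sum_(j < n) z ^+ (k * j) * a j = 0) ->
  forall i j, a i = a j.
Proof.
move=> dft0; have n_gt0 := prim_order_gt0 prim_z.
have inversion l : n%:R * a l = \sum_(j < n) a j.
  have dvd_shift (j : 'I_n) : (n %| n - l + j)%N = (j == l).
    case: j l => j jn [l ln] /=; apply/idP/eqP => [|[->]]; last by rewrite subnK ?dvdnn // ltnW.
    by move=> /dvdnP[[|[|q]] hq]; apply: val_inj => /=; nia.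
  (* Inverse transform at [l]: only the zeroth coefficient is nonzero. *)
  transitivity (\sum_(k < n) z ^+ (k * (n - l)) * \sum_(j < n) z ^+ (k * j) * a j).
    under [RHS]eq_bigr do rewrite mulr_sumr.
    rewrite [RHS]exchange_big /=.
    under [RHS]eq_bigr do (under eq_bigr do rewrite mulrA -exprD -mulnDr;
      rewrite -mulr_suml sum_prim_root_expr dvd_shift).
    by rewrite (bigD1 l) //= eqxx big1 ?addr0 // => j /negbTE ->; rewrite mul0r.
  rewrite (bigD1 (Ordinal n_gt0)) //= [X in _ + X]big1 ?addr0 => [|k k_neq0].
    by rewrite /= mul0n expr0 mul1r; apply: eq_bigr => j _; rewrite mul1r.
  rewrite (dft0 k) ?mulr0 // ltn_ord andbT lt0n.
  by apply: contraNneq k_neq0 => k0; apply/eqP/val_inj.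
move=> i j; apply: (mulfI (x := n%:R)); first by rewrite pnatr_eq0 -lt0n.
by rewrite !inversion.
Qed.
End PrimitiveRootSums.

Lemma fermat_pred_mod p n : prime p -> (0 < n < p)%N -> (n ^ p.-1 %% p = 1)%N.
Proof.
move=> p_prime /andP[n_gt0 n_lt_p].
rewrite -(totient_prime p_prime) Euler_exp_totient ?modn_small ?prime_gt1 //.
by rewrite coprime_sym prime_coprime // gtnNdvd.
Qed.

Section Xi.
Variable R : realType.

Lemma xi_expr p n :
  xi R p ^+ n = (cos (2 * pi / p%:R *+ n) +i* sin (2 * pi / p%:R *+ n))%C.
Proof.
elim: n => [|n IH]; first by rewrite expr0 !mulr0n cos0 sin0.
rewrite exprS IH /xi -[((_ +i* _) * (_ +i* _))%C]/(_ +i* _)%C.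
by rewrite !mulrSr cosD sinD; congr (Complex _ _); ring.
Qed.

Lemma norm_xi p : `|xi R p| = 1.
Proof. by rewrite -[`|(_ +i* _)%C|]/(Num.sqrt (_ + _))%:C%C cos2Dsin2 sqrtr1. Qed.

Lemma xi_exprp p : (0 < p)%N -> xi R p ^+ p = 1.
Proof.
move=> p_gt0; rewrite xi_expr -mulr_natr divfK ?pnatr_eq0 -?lt0n //.
by rewrite mulrC mulr_natr cos2pi sin2pi.
Qed.

Lemma xi_neq1 p : (2 < p)%N -> xi R p != 1.
Proof.
move=> p_gt2; apply/eqP => -[_ sin0]; move: sin0; apply/eqP; rewrite gt_eqF //.
apply: sin_gt0_pi; rewrite divr_gt0 ?mulr_gt0 ?pi_gt0 ?ltr0n //=; last lia.
by rewrite ltr_pdivrMr ?ltr0n 1?mulrC ?ltr_pM2l ?pi_gt0 ?ltr_nat //; lia.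
Qed.

Lemma xi_prim p : prime p -> (2 < p)%N -> p.-primitive_root (xi R p).
Proof.
move=> p_prime p_gt2; have p_gt0 := prime_gt0 p_prime.
have [m prim_m m_dvd_p] := prim_order_exists p_gt0 (xi_exprp _ p_gt0).
case/primeP: p_prime => _ /(_ m m_dvd_p) /pred2P[m1 | m_p]; last by rewrite m_p in prim_m.
by move: (xi_neq1 _ p_gt2); rewrite -(prim_expr_order prim_m) m1 expr1 eqxx.
Qed.
End Xi.

Section EuclideanNorm.
Context {R : realType}.
Local Notation C := (Cplx R).

Lemma conjC_continuous {T : topologicalType} {f : T -> C} :
  continuous f -> continuous (fun x => (f x)^*).
Proof.
move=> f_cont x; apply: (@continuous_comp _ _ _ f (fun z : C => z^*)); first exact: f_cont.
move=> A /= /nbhs_ballP[e e_gt0 eA]; apply/nbhs_ballP; exists e => // y fxy.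
by apply: eA; rewrite /ball_ /= -rmorphB norm_conjC.
Qed.

Lemma continuousX {T : topologicalType} {f : T -> C} {n : nat} :
  continuous f -> continuous (fun x => f x ^+ n).
Proof.
move=> f_cont; have -> : (fun x => f x ^+ n) = fun x => \prod_(i < n) f x.
  by apply/funext => x; rewrite prodr_const card_ord.
exact: (continuous_big mul_continuous).
Qed.

Lemma row_continuous (T : topologicalType) n (E : T -> 'I_n -> C) :
  (forall j, continuous (E^~ j)) -> continuous (fun x => \row_j E x j).
Proof.
move=> E_cont x A /(@nbhs_ballP C) [e e_gt0 eA].
have near_x : \forall y \near x, forall j, `|E x j - E y j| < e.
  by apply: filter_forall => j; exact: (cvgr_dist_lt _ _ (E_cont j x) _ e_gt0).
rewrite nbhs_simpl /=; apply: filterS near_x => y near_xy.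
by apply: eA; split=> // i j; rewrite !mxE; exact: near_xy.
Qed.

(* For [r >= 0], [hypot r u] is the square root of [r ^+ 2 + `|u| ^+ 2]; folding
   it along a vector gives a continuous euclidean norm without square roots. *)
Definition hypot (r u : C) : C := `|r + 'i * `|u| |.

Definition hypot_fold (s : seq C) : C := foldr (fun u r => hypot r u) 0 s.

Definition euclid {n} (v : 'rV[C]_n) : C := hypot_fold [seq v ord0 j | j <- index_enum 'I_n].

Lemma hypot_sqr r u : 0 <= r -> hypot r u ^+ 2 = r ^+ 2 + `|u| ^+ 2.
Proof.
move=> r_ge0; rewrite /hypot [LHS]normCK conjC_rect ?ger0_real ?normr_ge0 //.
by rewrite mulrC -subr_sqr exprMn sqrCi mulN1r opprK.
Qed.

Lemma hypot_fold_ge0 s : 0 <= hypot_fold s.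
Proof. by case: s => [|u s]; rewrite ?lexx ?normr_ge0. Qed.

Lemma hypot_fold_sqr s : hypot_fold s ^+ 2 = \sum_(u <- s) `|u| ^+ 2.
Proof.
elim: s => [|u s IH]; first by rewrite big_nil expr0n.
by rewrite big_cons /= hypot_sqr ?hypot_fold_ge0 // IH addrC.
Qed.

Lemma euclid_ge0 n (v : 'rV[C]_n) : 0 <= euclid v.
Proof. exact: hypot_fold_ge0. Qed.

Lemma euclid_sqr n (v : 'rV[C]_n) : euclid v ^+ 2 = sqnorm R n v.
Proof. by rewrite hypot_fold_sqr big_map. Qed.

Lemma hypot_continuous {T : topologicalType} {f g : T -> C} :
  continuous f -> continuous g -> continuous (fun x => hypot (f x) (g x)).
Proof.
move=> f_cont g_cont x.
exact: cvg_norm (continuousD (f_cont x) (continuousM (cvg_cst _) (cvg_norm (g_cont x)))).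
Qed.

Lemma euclid_continuous n : continuous (@euclid n).
Proof.
rewrite /euclid /hypot_fold; elim: (index_enum _) => [|j s IH].
  exact: cst_continuous.
exact: (hypot_continuous IH (coord_continuous (i:=ord0) (j:=j))).
Qed.

Lemma sqnorm_ge0 n (v : 'rV[C]_n) : 0 <= sqnorm R n v.
Proof. by apply: sumr_ge0 => j _; exact: exprn_ge0. Qed.

Lemma sqnorm_eq0 n (v : 'rV[C]_n) : sqnorm R n v = 0 -> v = 0.
Proof.
move/eqP; rewrite psumr_eq0 => [/allP v0|j _]; last exact: exprn_ge0.
apply/rowP => j; rewrite mxE; apply/eqP.
by rewrite -normr_eq0 -sqrf_eq0 (implyP (v0 j (mem_index_enum j))).
Qed.

Lemma sqnormZ n (c : C) (v : 'rV[C]_n) : sqnorm R n (c *: v) = `|c| ^+ 2 * sqnorm R n v.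
Proof. by rewrite /sqnorm mulr_sumr; apply: eq_bigr => j _; rewrite mxE normrM exprMn. Qed.

Definition pair_norm {m n} (y : 'rV[C]_m * 'rV[C]_n) : C := hypot (euclid y.1) (euclid y.2).

Definition normalize {m n} (y : 'rV[C]_m * 'rV[C]_n) : 'rV[C]_m * 'rV[C]_n :=
  ((pair_norm y)^-1 *: y.1, (pair_norm y)^-1 *: y.2).

Section PairNorm.
Context {m n : nat}.
Implicit Types y : 'rV[C]_m * 'rV[C]_n.

Lemma pair_norm_sqr y : pair_norm y ^+ 2 = sqnorm R m y.1 + sqnorm R n y.2.
Proof. by rewrite hypot_sqr ?euclid_ge0 // ger0_norm ?euclid_ge0 // !euclid_sqr. Qed.

Lemma pair_norm_ge0 y : 0 <= pair_norm y.
Proof. exact: normr_ge0. Qed.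

Lemma pair_norm_eq y y' :
  sqnorm R m y.1 = sqnorm R m y'.1 -> sqnorm R n y.2 = sqnorm R n y'.2 ->
  pair_norm y = pair_norm y'.
Proof.
move=> eq1 eq2; apply/eqP; rewrite -(@eqrXn2 _ 2) ?pair_norm_ge0 //.
by rewrite !pair_norm_sqr eq1 eq2.
Qed.

Lemma pair_norm_eq0 y : pair_norm y = 0 -> y.1 = 0 /\ y.2 = 0.
Proof.
move=> /(congr1 (fun r => r ^+ 2)); rewrite pair_norm_sqr expr0n /= => /eqP.
by rewrite paddr_eq0 ?sqnorm_ge0 // => /andP[/eqP/sqnorm_eq0 -> /eqP/sqnorm_eq0 ->].
Qed.

Lemma normalize_sphere y : pair_norm y != 0 ->
  sqnorm R m (normalize y).1 + sqnorm R n (normalize y).2 = 1.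
Proof.
move=> y_neq0; rewrite !sqnormZ -mulrDr -pair_norm_sqr normfV.
by rewrite ger0_norm ?pair_norm_ge0 // exprVn mulVf // expf_neq0.
Qed.

Lemma pair_norm_continuous : continuous (@pair_norm m n).
Proof.
apply: hypot_continuous.
  move=> y; apply: (@continuous_comp _ _ _ fst euclid); first exact: cvg_fst.
  exact: euclid_continuous.
move=> y; apply: (@continuous_comp _ _ _ snd euclid); first exact: cvg_snd.
exact: euclid_continuous.
Qed.

Lemma normalize_continuous y : pair_norm y != 0 -> {for y, continuous (@normalize m n)}.
Proof.
move=> y_neq0; have inv_cont := continuousV y_neq0 (pair_norm_continuous y).
have fst_cont : {for y, continuous fst} by exact: cvg_fst.
have snd_cont : {for y, continuous snd} by exact: cvg_snd.
exact: cvg_pair (continuousZ inv_cont fst_cont) (continuousZ inv_cont snd_cont).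
Qed.

End PairNorm.

End EuclideanNorm.

Section Construction.
Context {R : realType} {p : nat}.
Hypotheses (p_prime : prime p) (p_odd : odd p).
Local Notation C := (Cplx R).
Local Notation xi := (xi R p).
Implicit Types (x : src R p) (t : nat -> C) (v : 'rV[C]_p).

Let p_gt0 : (0 < p)%N. Proof. exact: prime_gt0. Qed.

Let p_gt2 : (2 < p)%N.
Proof. by move: (prime_gt1 p_prime) p_odd; case: p => [|[|[|]]]. Qed.

Let prim_xi : p.-primitive_root xi := @xi_prim R p p_prime p_gt2.

Definition coord_prod v : C := \prod_(j < p) v ord0 j.

Definition psiU x : 'rV[C]_p :=
  \row_j (x.1 ord0 j ^+ p * (coord_prod x.1)^* + x.2 ord0 j ^+ p * (coord_prod x.2)^*).

Definition mass x (j : 'I_p) : C := `|x.1 ord0 j| ^+ 2 + 'i * `|x.2 ord0 j| ^+ 2.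

Definition mass_dft x k : C := \sum_(j < p) xi ^+ (k * j) * mass x j.

(* [k.+1 ^ p.-2] inverts [k.+1] modulo [p], so that every coordinate picks up
   the same factor [xi] under the generator [a]. *)
Definition psiV x : 'rV[C]_p.-1 := \row_(k < p.-1) mass_dft x k.+1 ^+ (k.+1 ^ p.-2).

Definition psi x : tgt R p := (psiU x, psiV x).

Definition shift_src x : src R p := (shiftU R p x.1, shiftU R p x.2).

Definition torus_src t x : src R p := (torusU R p 1 t x.1, torusU R p 1 t x.2).

Lemma act_srcE t m x : act_src R p t m x = torus_src t (iter m shift_src x).
Proof.
suff -> : iter m shift_src x = (iter m (shiftU R p) x.1, iter m (shiftU R p) x.2) by [].
by elim: m => [|m IH]; [case: x | rewrite iterS IH].
Qed.

Definition shift_ord (j : 'I_p) : 'I_p := insubd j ((j + p.-1) %% p)%N.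

Lemma shiftUE v : shiftU R p v = \row_j v ord0 (shift_ord j).
Proof. by []. Qed.

Lemma val_shift_ord j : val (shift_ord j) = ((j + p.-1) %% p)%N.
Proof. by rewrite val_insubd ltn_pmod. Qed.

Lemma shift_ord_inj : injective shift_ord.
Proof.
move=> i j /(congr1 val); rewrite !val_shift_ord => /eqP; rewrite eqn_modDr.
by rewrite !modn_small // => /eqP /val_inj.
Qed.

Lemma coord_prod_shiftU v : coord_prod (shiftU R p v) = coord_prod v.
Proof.
rewrite /coord_prod; under eq_bigr do rewrite shiftUE mxE.
by rewrite [RHS](reindex_inj shift_ord_inj).
Qed.

Lemma sqnorm_shiftU v : sqnorm R p (shiftU R p v) = sqnorm R p v.
Proof.
rewrite /sqnorm; under eq_bigr do rewrite shiftUE mxE.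
by rewrite [RHS](reindex_inj shift_ord_inj).
Qed.

Lemma psiU_shift x : psiU (shift_src x) = shiftU R p (psiU x).
Proof. by apply/rowP => j; rewrite shiftUE !mxE /= !coord_prod_shiftU. Qed.

Lemma mass_dft_shift x k : mass_dft (shift_src x) k = xi ^+ k * mass_dft x k.
Proof.
have shift_expr j : xi ^+ (k * (shift_ord j).+1) = xi ^+ (k * j).
  rewrite -(prim_expr_mod prim_xi) -[RHS](prim_expr_mod prim_xi).
  congr (xi ^+ _); rewrite val_shift_ord -modnMmr -[RHS]modnMmr; congr (_ %% _)%N.
  by rewrite -addn1 modnDml -addnA addn1 prednK // modnDr.
rewrite /mass_dft mulr_sumr [RHS](reindex_inj shift_ord_inj); apply: eq_bigr => j _.
by rewrite mulrA -exprD -mulnS shift_expr /mass /shift_src /= !shiftUE !mxE.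
Qed.

Lemma psiV_shift x : psiV (shift_src x) = xi *: psiV x.
Proof.
apply/rowP => k; rewrite !mxE mass_dft_shift exprMn -exprM -expnS.
rewrite -(prim_expr_mod prim_xi) prednK ?fermat_pred_mod ?expr1 //; have := ltn_ord k; lia.
Qed.

Definition chi t j : C := (tc R p t j)^-1 * tc R p t j.+1.

Lemma torusU_chi k t v : torusU R p k t v = \row_j (chi t j ^ k * v ord0 j).
Proof. by apply/rowP => j; rewrite !mxE -exprz_inv /chi expfzMl. Qed.

Section Torus.
Variable t : nat -> C.
Hypothesis t_torus : in_torus R p t.

Lemma norm_tc j : `|tc R p t j| = 1.
Proof. by rewrite /tc; case: ifP => [/t_torus|]; rewrite ?normr1. Qed.

Lemma tc_neq0 j : tc R p t j != 0.
Proof. by rewrite -normr_eq0 norm_tc oner_eq0. Qed.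

Lemma norm_chi j : `|chi t j| = 1.
Proof. by rewrite normrM normfV !norm_tc invr1 mul1r. Qed.

(* The product telescopes, since [tc t 0 = tc t p = 1]. *)
Lemma prod_chi : \prod_(j < p) chi t j = 1.
Proof.
rewrite big_split /= prodfV.
have shift_prod : \prod_(j < p) tc R p t j.+1 = \prod_(j < p) tc R p t j.
  have := big_ord_recl p (fun j : 'I_p.+1 => tc R p t j) (op := *%R) (idx := 1).
  rewrite (big_ord_recr p (fun j : 'I_p.+1 => tc R p t j)) /= {1 2}/tc ltnn andbF mulr1 mul1r.
  by move=> <-; apply: eq_bigr.
by rewrite shift_prod mulVf // prodf_seq_neq0; apply/allP => j _; exact: tc_neq0.
Qed.

Lemma sqnorm_torusU (k : nat) v : sqnorm R p (torusU R p k t v) = sqnorm R p v.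
Proof.
rewrite /sqnorm torusU_chi; apply: eq_bigr => j _.
by rewrite mxE normrM -exprnP normrX norm_chi expr1n mul1r.
Qed.

Lemma coord_prod_torusU v : coord_prod (torusU R p 1 t v) = coord_prod v.
Proof.
rewrite /coord_prod torusU_chi; under eq_bigr do rewrite mxE expr1z.
by rewrite big_split /= prod_chi mul1r.
Qed.

Lemma psiU_torus x : psiU (torus_src t x) = torusU R p p t (psiU x).
Proof.
apply/rowP => j; rewrite /psiU /torus_src /= !coord_prod_torusU !torusU_chi !mxE.
by rewrite !expr1z -exprnP !exprMn mulrDr !mulrA.
Qed.

Lemma mass_torus x j : mass (torus_src t x) j = mass x j.
Proof. by rewrite /mass /= !torusU_chi !mxE !expr1z !normrM !normfV !norm_tc invr1 !mul1r. Qed.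

Lemma psiV_torus x : psiV (torus_src t x) = psiV x.
Proof. by apply/rowP => k; rewrite !mxE /mass_dft; under eq_bigr do rewrite mass_torus. Qed.

End Torus.

Lemma psiU_iter m x : psiU (iter m shift_src x) = iter m (shiftU R p) (psiU x).
Proof. by elim: m => [|m IH] //; rewrite !iterS psiU_shift IH. Qed.

Lemma psiV_iter m x : psiV (iter m shift_src x) = xi ^+ m *: psiV x.
Proof.
elim: m => [|m IH]; first by rewrite scale1r.
by rewrite iterS psiV_shift IH scalerA exprS.
Qed.

Lemma psi_act t m x : in_torus R p t -> psi (act_src R p t m x) = act_tgt R p t m (psi x).
Proof. by move=> t_torus; rewrite /psi act_srcE psiU_torus // psiV_torus // psiU_iter psiV_iter. Qed.

Lemma actUZ k t m (c : C) v : actU R p k t m (c *: v) = c *: actU R p k t m v.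
Proof.
have shiftUZ w : shiftU R p (c *: w) = c *: shiftU R p w by apply/rowP => j; rewrite !mxE.
rewrite /actU; have -> : iter m (shiftU R p) (c *: v) = c *: iter m (shiftU R p) v.
  by elim: m => [|m IH] //; rewrite !iterS IH shiftUZ.
by apply/rowP => j; rewrite !mxE mulrCA.
Qed.

Lemma sqnorm_actU (k : nat) t m v : in_torus R p t ->
  sqnorm R p (actU R p k t m v) = sqnorm R p v.
Proof.
move=> t_torus; rewrite sqnorm_torusU //.
by elim: m => [|m IH] //; rewrite iterS sqnorm_shiftU.
Qed.

Lemma pair_norm_act_tgt t m y : in_torus R p t ->
  pair_norm (act_tgt R p t m y) = pair_norm y.
Proof.
move=> t_torus; apply: pair_norm_eq; first exact: sqnorm_actU.
by rewrite /actV sqnormZ normrX norm_xi !expr1n mul1r.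
Qed.

Lemma normalize_act_tgt t m y : in_torus R p t ->
  normalize (act_tgt R p t m y) = act_tgt R p t m (normalize y).
Proof.
move=> t_torus; rewrite /normalize pair_norm_act_tgt //.
by rewrite /act_tgt /= actUZ /actV !scalerA mulrC.
Qed.

Lemma psiU_eq0 x : psiU x = 0 -> coord_prod x.1 = 0 /\ coord_prod x.2 = 0.
Proof.
move=> /rowP psiU0.
have : \prod_(j < p) (x.1 ord0 j ^+ p * (coord_prod x.1)^*) =
       \prod_(j < p) - (x.2 ord0 j ^+ p * (coord_prod x.2)^*).
  apply: eq_bigr => j _; apply/eqP; rewrite -addr_eq0; apply/eqP.
  by have := psiU0 j; rewrite !mxE.
(* As [p] is odd, this says [|Z| ^+ (2 * p) = - |W| ^+ (2 * p)]. *)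
rewrite prodrN !big_split /= !prodrXl !prodr_const !card_ord.
rewrite -signr_odd p_odd expr1 mulN1r -!exprMn -!normCK -!exprM => /eqP.
rewrite -addr_eq0 paddr_eq0 ?exprn_ge0 ?normr_ge0 // !expf_eq0 !normr_eq0.
by case/andP => /andP[_ /eqP Z0] /andP[_ /eqP W0]; split.
Qed.

Lemma psiV_eq0 x : psiV x = 0 -> forall i j, mass x i = mass x j.
Proof.
move=> /rowP psiV0; apply: (prim_root_dft_const prim_xi (mass x)) => k /andP[k_gt0 k_lt_p].
have k_pred : (k.-1 < p.-1)%N by lia.
have := psiV0 (Ordinal k_pred); rewrite !mxE prednK // => /eqP.
by rewrite expf_eq0 => /andP[_ /eqP].
Qed.

Lemma psi_neq0 x : S_src R p x -> pair_norm (psi x) != 0.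
Proof.
move=> x_sphere; apply/eqP => /pair_norm_eq0[/psiU_eq0[Z0 W0] /psiV_eq0 mass_const].
move: Z0 W0 => /eqP/prodf_eq0[j0 _ /eqP z0] /eqP/prodf_eq0[k0 _ /eqP w0].
have Re_mass j : 'Re (mass x j) = `|x.1 ord0 j| ^+ 2.
  by rewrite Re_rect ?rpredX ?normr_real.
have Im_mass j : 'Im (mass x j) = `|x.2 ord0 j| ^+ 2.
  by rewrite Im_rect ?rpredX ?normr_real.
have z_eq0 j : `|x.1 ord0 j| ^+ 2 = 0.
  by rewrite -Re_mass (mass_const j j0) Re_mass z0 normr0 expr0n.
have w_eq0 j : `|x.2 ord0 j| ^+ 2 = 0.
  by rewrite -Im_mass (mass_const j k0) Im_mass w0 normr0 expr0n.
move: x_sphere; rewrite /S_src /sqnorm /= !big1 // addr0 => /esym/eqP.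
by rewrite oner_eq0.
Qed.

Lemma coord1_continuous j : continuous (fun x : src R p => x.1 ord0 j).
Proof.
move=> x; apply: (@continuous_comp _ _ _ fst (fun v : 'rV[C]_p => v ord0 j)).
  exact: cvg_fst.
exact: coord_continuous.
Qed.

Lemma coord2_continuous j : continuous (fun x : src R p => x.2 ord0 j).
Proof.
move=> x; apply: (@continuous_comp _ _ _ snd (fun v : 'rV[C]_p => v ord0 j)).
  exact: cvg_snd.
exact: coord_continuous.
Qed.

Lemma coord_prod_continuous {g : src R p -> 'rV[C]_p} :
  (forall j, continuous (fun x => g x ord0 j)) -> continuous (fun x => coord_prod (g x)).
Proof. by move=> g_cont; exact: (continuous_big mul_continuous). Qed.

Lemma psiU_continuous : continuous psiU.
Proof.
apply: row_continuous => j x.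
have term_cont (g : src R p -> 'rV[C]_p) : (forall j, continuous (fun x => g x ord0 j)) ->
    {for x, continuous (fun x => g x ord0 j ^+ p * (coord_prod (g x))^*)}.
  move=> g_cont.
  exact: continuousM (continuousX (g_cont j) x) (conjC_continuous (coord_prod_continuous g_cont) x).
exact: continuousD (term_cont _ coord1_continuous) (term_cont _ coord2_continuous).
Qed.

Lemma mass_continuous j : continuous (mass^~ j).
Proof.
have sq_norm_cont (g : src R p -> C) : continuous g -> continuous (fun x => `|g x| ^+ 2).
  by move=> g_cont; apply: continuousX => x; exact: cvg_norm (g_cont x).
move=> x; have mod1_cont := sq_norm_cont _ (coord1_continuous j) x.
exact: continuousD mod1_cont (continuousM (cvg_cst _) (sq_norm_cont _ (coord2_continuous j) x)).
Qed.

Lemma psiV_continuous : continuous psiV.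
Proof.
apply: row_continuous => k; apply: continuousX.
apply: (continuous_big add_continuous) => j _ x.
exact: continuousM (cvg_cst _) (mass_continuous j x).
Qed.

Lemma psi_continuous : continuous psi.
Proof. by move=> x; apply: cvg_pair (psiU_continuous x) (psiV_continuous x). Qed.

End Construction.

Theorem mainTheorem12 (R : realType) (p : nat) :
  prime p -> odd p ->
  exists f : src R p -> tgt R p,
    {within S_src R p, continuous f} /\
    (forall x, S_src R p x -> S_tgt R p (f x)) /\
    (forall (t : nat -> Cplx R) (m : nat) (x : src R p),
        in_torus R p t -> S_src R p x ->
        f (act_src R p t m x) = act_tgt R p t m (f x)).
Proof.
move=> p_prime p_odd; exists (normalize \o @psi R p); split; [|split].
- apply: continuous_in_subspaceT => x; rewrite inE => x_sphere.
  apply: continuous_comp; first exact: psi_continuous.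
  exact: normalize_continuous (psi_neq0 p_prime p_odd _ x_sphere).
- by move=> x x_sphere; exact: normalize_sphere (psi_neq0 p_prime p_odd _ x_sphere).
- by move=> t m x t_torus _; rewrite /= psi_act // normalize_act_tgt.
Qed.
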